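(* Let $v,w\in\mathbb C\cong\mathbb R^2$ form a positively oriented basis, let $\vartheta\in(0,\pi)$ be the angle from $v$ to $w$, and let $H:S^1\to S^1$ be the holonomy obtained by moving the tracer point of a Prytz planimeter of length $\ell$ around the parallelogram with successive vertices $0,v,v+w,w,0$ (base point $0$). Then $H$ is the restriction to $S^1$ of $z\mapsto\frac{\alpha z+\beta}{\bar\beta z+\bar\alpha}$ for a matrix $\begin{pmatrix}\alpha&\beta\\ \bar\beta&\bar\alpha\end{pmatrix}\in SU(1,1)$ with trace $$2-4\,s^2,\qquad s=\sinh\!\Big(\frac{|v|}{2\ell}\Big)\sinh\!\Big(\frac{|w|}{2\ell}\Big)\sin\vartheta.$$ Consequently, if $s>1$ then $H$ has exactly two fixed points on $S^1$, one attracting and one repelling; if $s<1$ then $H$ has no fixed points on $S^1$. *)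

From Stdlib Require Import Reals.
From Coquelicot Require Import Coquelicot.
Open Scope R_scope.

Definition on_circle (z : C) : Prop := Cmod z = 1.

(* Prytz planimeter of length l: tracer point P(t), chisel Q = P + l*z with
   z in S^1 the direction of the rod.  The no-slip condition (Q' parallel to z)
   gives the Riccati equation  z' = (z^2 * conj(P') - P') / (2 l).
   Along a straight segment with constant velocity P' = u this is: *)
Definition prytz_field (l : R) (u z : C) : C :=
  Cmult (RtoC (/ (2 * l))) (Cminus (Cmult (Cmult z z) (Cconj u)) u).

Definition prytz_segment (l : R) (u a b : C) : Prop :=
  exists z : R -> C, z 0 = a /\ z 1 = b /\
    forall t : R, is_derive z t (prytz_field l u (z t)).

Definition prytz_holonomy (l : R) (v w z0 z4 : C) : Prop :=
  exists z1 z2 z3 : C,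
    prytz_segment l v z0 z1 /\ prytz_segment l w z1 z2 /\
    prytz_segment l (Copp v) z2 z3 /\ prytz_segment l (Copp w) z3 z4.

Definition mobius (alpha beta z : C) : C :=
  Cdiv (Cplus (Cmult alpha z) beta) (Cplus (Cmult (Cconj beta) z) (Cconj alpha)).

Definition attracting_on_circle (f : C -> C) (p : C) : Prop :=
  on_circle p /\ f p = p /\
  exists eps : R, 0 < eps /\
    forall x : C, on_circle x -> Cmod (Cminus x p) < eps ->
      is_lim_seq (fun n : nat => Cmod (Cminus (Nat.iter n f x) p)) 0.

Definition repelling_on_circle (f : C -> C) (p : C) : Prop :=
  on_circle p /\ f p = p /\
  exists eps : R, 0 < eps /\
    forall x : C, on_circle x -> 0 < Cmod (Cminus x p) < eps ->
      exists n : nat, eps <= Cmod (Cminus (Nat.iter n f x) p).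

(* Along a side [u] the rod direction [z] obeys the Riccati equation [z' = (z^2 conj u - u) / (2 l)],
   the infinitesimal Möbius action of [X = [[0, -u], [-conj u, 0]] / (2 l)] in su(1,1); solutions
   are unique (Gronwall), so a side acts on the circle by the Möbius map of [exp X], i.e. of
   [[cosh r, -sinh r u / |u|], ...] with [r = |u| / (2 l)].  The holonomy is the commutator
   [Q^-1 P^-1 Q P] of the matrices [P], [Q] of the sides [v], [w]; for matrices with real diagonal
   entries its trace is [2 - 4 (Im (conj p q))^2], here [2 - 4 s^2].  Writing [Re alpha = 1 - 2 s^2]:
   if [s < 1] then [|Re alpha| < 1] and the fixed-point equation [Im (conj beta x) = Im alpha] has no
   solution on the circle; if [s > 1] it has two, at which the denominator [conj beta x + conj alpha]
   takes real values [lp], [lq] with [|lq| < |lp|], and the map multiplies the ratio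
   [|z - p| / |z - q|] by [|lq| / |lp|], so [p] attracts and [q] repels. *)

From Stdlib Require Import Reals Lra Nsatz.
From Coquelicot Require Import Coquelicot.
Open Scope R_scope.

Section ComplexPreliminaries.
Local Open Scope C_scope.

Definition Cnorm2 (z : C) : R := (fst z * fst z + snd z * snd z)%R.

Lemma Cmod_sqr (z : C) : (Cmod z ^ 2 = Cnorm2 z)%R.
Proof. rewrite Cmod2_alt; unfold Re, Im, Cnorm2; ring. Qed.

Lemma Cnorm2_ge0 (z : C) : (0 <= Cnorm2 z)%R.
Proof. unfold Cnorm2; pose proof (Rle_0_sqr (fst z)); pose proof (Rle_0_sqr (snd z)); unfold Rsqr in *; lra. Qed.

Lemma on_circleE (z : C) : on_circle z <-> Cnorm2 z = 1%R.
Proof.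
  unfold on_circle; rewrite <- Cmod_sqr; split; intros H.
  - rewrite H; ring.
  - pose proof (Cmod_ge_0 z); nra.
Qed.

Lemma Cmod_eq_of_Cnorm2 (x y : C) : Cnorm2 x = Cnorm2 y -> Cmod x = Cmod y.
Proof. intros H; unfold Cmod; f_equal; unfold Cnorm2 in H; simpl; rewrite !Rmult_1_r; exact H. Qed.

Lemma Cnorm2_le0 (z : C) : (Cnorm2 z <= 0)%R -> z = 0.
Proof.
  unfold Cnorm2; intros H; pose proof (Rle_0_sqr (fst z)); pose proof (Rle_0_sqr (snd z)).
  unfold Rsqr in *; apply injective_projections; simpl; nra.
Qed.

Lemma Cmod_neq0 (z : C) : z <> 0 -> Cmod z <> 0%R.
Proof. intros Hz E; apply Hz, Cmod_eq_0, E. Qed.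

Lemma Cmod_sub_pos (x y : C) : x <> y -> (0 < Cmod (x - y))%R.
Proof. intros H; apply Cmod_gt_0; intros E; apply H; rewrite <- (Cplus_0_l y), <- E; ring. Qed.

Lemma Cmod_sub_sym (x y : C) : Cmod (x - y) = Cmod (y - x).
Proof. rewrite <- Cmod_opp; f_equal; ring. Qed.

End ComplexPreliminaries.

Section SU11.
Local Open Scope C_scope.

(* A pair [M = (alpha, beta)] stands for the matrix [[alpha, beta], [conj beta, conj alpha]]. *)
Definition su11 (M : C * C) : Prop := (Cmod (fst M) ^ 2 - Cmod (snd M) ^ 2 = 1)%R.

Definition act (M : C * C) : C -> C := mobius (fst M) (snd M).

Definition act_den (M : C * C) (z : C) : C := Cconj (snd M) * z + Cconj (fst M).

Definition mx_mul (M N : C * C) : C * C :=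
  (fst M * fst N + snd M * Cconj (snd N), fst M * snd N + snd M * Cconj (fst N)).

Definition mx_inv (M : C * C) : C * C := (fst M, - snd M).

Lemma actE (M : C * C) (z : C) : act M z = (fst M * z + snd M) / act_den M z.
Proof. reflexivity. Qed.

Lemma su11E (M : C * C) : su11 M <-> (Cnorm2 (fst M) - Cnorm2 (snd M) = 1)%R.
Proof. unfold su11; rewrite !Cmod_sqr; tauto. Qed.

(* [|act_den M z| >= |alpha| - |beta| > 0]. *)
Lemma act_den_neq0 (M : C * C) (z : C) : su11 M -> on_circle z -> act_den M z <> 0.
Proof.
  unfold su11, on_circle, act_den; intros HM Hz; apply Cmod_gt_0.
  assert (Htri : (Cmod (fst M) <= Cmod (Cconj (snd M) * z + Cconj (fst M)) + Cmod (snd M))%R).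
  { rewrite <- (Cmod_conj (fst M)), <- (Cmod_conj (snd M)), <- (Rmult_1_r (Cmod (Cconj (snd M)))), <- Hz,
      <- Cmod_mult, <- (Cmod_opp (Cconj (snd M) * z)).
    replace (Cconj (fst M)) with ((Cconj (snd M) * z + Cconj (fst M)) + - (Cconj (snd M) * z)) at 1 by ring.
    apply Cmod_triangle. }
  pose proof (Cmod_ge_0 (fst M)); pose proof (Cmod_ge_0 (snd M)); nra.
Qed.

Lemma act_on_circle (M : C * C) (z : C) : su11 M -> on_circle z -> on_circle (act M z).
Proof.
  intros HM Hz; pose proof (act_den_neq0 M z HM Hz) as Hden.
  unfold on_circle; rewrite actE, Cmod_div by exact Hden.
  assert (Hmod : Cmod (fst M * z + snd M) = Cmod (act_den M z)).
  { apply Cmod_eq_of_Cnorm2; rewrite su11E in HM; rewrite on_circleE in Hz.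
    destruct M as [[a1 a2] [b1 b2]], z as [z1 z2]; unfold act_den, Cnorm2 in *; simpl in *; nsatz. }
  rewrite Hmod; field; intros H0; apply Hden, Cmod_eq_0, H0.
Qed.

Lemma su11_mul (M N : C * C) : su11 M -> su11 N -> su11 (mx_mul M N).
Proof.
  rewrite !su11E; destruct M as [[a1 a2] [b1 b2]], N as [[c1 c2] [d1 d2]]; unfold Cnorm2; simpl.
  intros; nsatz.
Qed.

Lemma su11_inv (M : C * C) : su11 M -> su11 (mx_inv M).
Proof. unfold su11, mx_inv; simpl; rewrite Cmod_opp; auto. Qed.

Lemma act_mul (M N : C * C) (z : C) : su11 M -> su11 N -> on_circle z ->
  act (mx_mul M N) z = act M (act N z).
Proof.
  intros HM HN Hz.
  pose proof (act_den_neq0 N z HN Hz) as HdN.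
  pose proof (act_den_neq0 M (act N z) HM (act_on_circle N z HN Hz)) as HdM.
  assert (Hden : act_den (mx_mul M N) z = act_den M (act N z) * act_den N z).
  { unfold act_den, act, mobius, mx_mul in *; simpl.
    rewrite !Cplus_conj, !Cmult_conj, !Cconj_conj; field; exact HdN. }
  assert (Hnum : fst (mx_mul M N) * z + snd (mx_mul M N)
                 = (fst M * act N z + snd M) * act_den N z).
  { unfold act_den, act, mobius, mx_mul in *; simpl; field; exact HdN. }
  rewrite (actE (mx_mul M N)), (actE M), Hden, Hnum; field; auto.
Qed.

Lemma su11_det (M : C * C) : su11 M -> fst M * Cconj (fst M) - snd M * Cconj (snd M) = 1.
Proof.
  rewrite su11E; destruct M as [[a1 a2] [b1 b2]]; unfold Cnorm2; simpl; intros H.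
  apply injective_projections; simpl; nsatz.
Qed.

Lemma act_sub (M : C * C) (z w : C) : su11 M -> on_circle z -> on_circle w ->
  act M z - act M w = (z - w) / (act_den M z * act_den M w).
Proof.
  intros HM Hz Hw.
  pose proof (act_den_neq0 M z HM Hz); pose proof (act_den_neq0 M w HM Hw).
  assert (Hsub : z - w = (fst M * z + snd M) * act_den M w - (fst M * w + snd M) * act_den M z).
  { rewrite <- (Cmult_1_l (z - w)), <- (su11_det M HM); unfold act_den; ring. }
  rewrite Hsub, !actE; field; auto.
Qed.

Lemma act_fixE (M : C * C) (x : C) : su11 M -> on_circle x ->
  act M x = x <-> snd (Cconj (snd M) * x) = snd (fst M).
Proof.
  intros HM Hx; pose proof (act_den_neq0 M x HM Hx) as Hden.
  rewrite actE; rewrite su11E in HM; rewrite on_circleE in Hx.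
  assert (Hfix : act_den M x <> 0 -> (fst M * x + snd M) / act_den M x = x
                 <-> fst M * x + snd M = x * act_den M x).
  { intros H; split; intros E; [rewrite <- E at 2 | rewrite E]; field; exact H. }
  rewrite (Hfix Hden); clear Hfix Hden.
  destruct M as [[a1 a2] [b1 b2]], x as [x1 x2]; unfold act_den, Cnorm2 in *; simpl in *; split.
  - intros E; injection E as E1 E2; nsatz.
  - intros E; apply injective_projections; simpl; nsatz.
Qed.

Lemma act_no_fixpoint (M : C * C) (x : C) : su11 M -> (fst (fst M) * fst (fst M) < 1)%R ->
  on_circle x -> act M x <> x.
Proof.
  intros HM Ha Hx Hfix; rewrite (act_fixE M x HM Hx) in Hfix.
  rewrite su11E in HM; rewrite on_circleE in Hx.
  destruct M as [[a1 a2] [b1 b2]], x as [x1 x2]; unfold Cnorm2 in *; simpl in *.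
  assert (Hnorm : ((b1 * x1 + b2 * x2) * (b1 * x1 + b2 * x2) + a2 * a2 = (b1 * b1 + b2 * b2) * (x1 * x1 + x2 * x2))%R).
  { rewrite <- Hfix; ring. }
  pose proof (Rle_0_sqr (b1 * x1 + b2 * x2)); unfold Rsqr in *; nra.
Qed.

End SU11.
Section HyperbolicDynamics.
Local Open Scope C_scope.

Variables (M : C * C) (p q : C) (lp lq : R).
Hypotheses (HM : su11 M) (Hp : on_circle p) (Hq : on_circle q)
  (Fp : act M p = p) (Fq : act M q = q)
  (Lp : act_den M p = RtoC lp) (Lq : act_den M q = RtoC lq)
  (Hlqp : (Rabs lq < Rabs lp)%R).

Lemma dist_act_fixed (r : C) (lr : R) (z : C) : on_circle z -> on_circle r ->
  act M r = r -> act_den M r = RtoC lr ->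
  Cmod (act M z - r) = (Cmod (z - r) / (Cmod (act_den M z) * Rabs lr))%R.
Proof.
  intros Hz Hr Fr Lr; pose proof (act_den_neq0 M r HM Hr) as Hdr.
  rewrite <- Fr at 1; rewrite (act_sub M z r HM Hz Hr), Cmod_div, Cmod_mult, Lr, Cmod_R; [reflexivity |].
  apply Cmult_neq_0; [apply act_den_neq0 |]; auto.
Qed.

Lemma iter_act_on_circle (n : nat) (z : C) : on_circle z -> on_circle (Nat.iter n (act M) z).
Proof. intros Hz; induction n; simpl; auto; apply act_on_circle; auto. Qed.

Lemma fixed_den_pos : (0 < Rabs lq)%R.
Proof.
  apply Rabs_pos_lt; intros E; apply (act_den_neq0 M q HM Hq); rewrite Lq, E; reflexivity.
Qed.

Lemma fixed_points_neq : p <> q.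
Proof. intros E; subst q; rewrite Lp in Lq; injection Lq as E; subst; lra. Qed.

(* Each application of [act M] scales the ratio [|z - p| / |z - q|] by [|lq| / |lp| < 1]. *)
Lemma iter_act_ratio (n : nat) (z : C) : on_circle z ->
  (Cmod (Nat.iter n (act M) z - p) * Rabs lp ^ n * Cmod (z - q)
   = Rabs lq ^ n * Cmod (Nat.iter n (act M) z - q) * Cmod (z - p))%R.
Proof.
  intros Hz; pose proof fixed_den_pos; induction n as [| n IH]; [simpl; ring |].
  pose proof (iter_act_on_circle n z Hz) as Hzn; simpl Nat.iter.
  set (zn := Nat.iter n (act M) z) in *.
  rewrite (dist_act_fixed p lp zn), (dist_act_fixed q lq zn); auto.
  assert (0 < Cmod (act_den M zn))%R by (apply Cmod_gt_0, act_den_neq0; auto).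
  simpl; field_simplify_eq; [exact IH | split; lra].
Qed.

Lemma iter_act_cvg (z : C) : on_circle z -> z <> q ->
  is_lim_seq (fun n => Cmod (Nat.iter n (act M) z - p)) 0.
Proof.
  intros Hz Hzq; pose proof fixed_den_pos; pose proof (Cmod_sub_pos z q Hzq).
  set (rho := (Rabs lq / Rabs lp)%R).
  set (K := (2 * (Cmod (z - p) / Cmod (z - q)))%R).
  assert (Hrho : (0 <= rho < 1)%R).
  { unfold rho; split; [apply Rle_mult_inv_pos; lra |].
    apply Rmult_lt_reg_r with (Rabs lp); [lra |]; field_simplify; lra. }
  apply is_lim_seq_le_le with (u := fun _ => 0%R) (w := fun n => (K * rho ^ n)%R).
  - intros n; split; [apply Cmod_ge_0 |].
    pose proof (iter_act_ratio n z Hz) as Hratio.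
    pose proof (iter_act_on_circle n z Hz) as Hzn.
    set (zn := Nat.iter n (act M) z) in *.
    assert (Hbound : (Cmod (zn - q) <= 2)%R).
    { eapply Rle_trans; [apply Cmod_triangle |]; rewrite Cmod_opp.
      unfold on_circle in *; lra. }
    assert (Hlpn : (0 < Rabs lp ^ n)%R) by (apply pow_lt; lra).
    assert (Hzn_p : Cmod (zn - p) = (rho ^ n * Cmod (zn - q) * (Cmod (z - p) / Cmod (z - q)))%R).
    { apply Rmult_eq_reg_r with (Rabs lp ^ n * Cmod (z - q))%R; [| nra].
      rewrite <- Rmult_assoc, Hratio; unfold rho, Rdiv; rewrite Rpow_mult_distr, pow_inv.
      field; lra. }
    assert (0 <= rho ^ n)%R by (apply pow_le; lra).
    assert (0 <= Cmod (z - p) / Cmod (z - q))%R by (apply Rle_mult_inv_pos; [apply Cmod_ge_0 | lra]).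
    assert (0 <= rho ^ n * (Cmod (z - p) / Cmod (z - q)))%R by (apply Rmult_le_pos; auto).
    rewrite Hzn_p; unfold K; nra.
  - apply is_lim_seq_const.
  - replace (Finite 0) with (Rbar_mult K 0) by (simpl; f_equal; ring).
    apply is_lim_seq_scal_l, is_lim_seq_geom; rewrite Rabs_pos_eq; lra.
Qed.

Lemma act_attracting : attracting_on_circle (act M) p.
Proof.
  split; [exact Hp | split; [exact Fp |]].
  exists (Cmod (p - q)); split; [apply Cmod_sub_pos, fixed_points_neq |].
  intros x Hx Hxp; apply iter_act_cvg; [exact Hx |].
  intros E; subst x; rewrite Cmod_sub_sym in Hxp; lra.
Qed.

Lemma act_repelling : repelling_on_circle (act M) q.
Proof.
  split; [exact Hq | split; [exact Fq |]].
  pose proof (Cmod_sub_pos p q fixed_points_neq).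
  exists (Cmod (p - q) / 2)%R; split; [lra |].
  intros x Hx [Hx0 Hxe].
  assert (Hxq : x <> q) by (intros E; subst; replace (q - q) with (RtoC 0) in Hx0 by ring; rewrite Cmod_0 in Hx0; lra).
  pose proof (iter_act_cvg x Hx Hxq) as Hcvg; apply is_lim_seq_spec in Hcvg.
  assert (Heps : (0 < Cmod (p - q) / 2)%R) by lra.
  destruct (Hcvg (mkposreal _ Heps)) as [N HN]; exists N.
  specialize (HN N (le_n N)); simpl in HN.
  rewrite Rminus_0_r, Rabs_pos_eq in HN by apply Cmod_ge_0.
  set (xN := Nat.iter N (act M) x) in *.
  assert (Htri : (Cmod (p - q) <= Cmod (xN - p) + Cmod (xN - q))%R).
  { rewrite (Cmod_sub_sym xN p); replace (p - q) with ((p - xN) + (xN - q)) by ring.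
    apply Cmod_triangle. }
  lra.
Qed.

End HyperbolicDynamics.

Section HyperbolicFixedPoints.
Local Open Scope C_scope.

Variables (M : C * C) (e : R).
Hypotheses (HM : su11 M) (Ha : (1 < fst (fst M) * fst (fst M))%R)
  (He : (e * e = fst (fst M) * fst (fst M) - 1)%R).

(* The fixed points are the [x] with [conj beta x = e' + i Im alpha], [e' = e] or [e' = -e]. *)
Definition hyperbolic_fixed_point (e' : R) : C := (e', snd (fst M)) / Cconj (snd M).

Lemma beta_conj_neq0 : Cconj (snd M) <> 0.
Proof.
  intros E; assert (Hb : Cmod (snd M) = 0%R) by (rewrite <- Cmod_conj, E; apply Cmod_0).
  unfold su11 in HM; rewrite Hb, Cmod_sqr in HM; unfold Cnorm2 in HM.
  pose proof (Rle_0_sqr (snd (fst M))); unfold Rsqr in *; nra.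
Qed.

Lemma hyperbolic_fixed_pointK (e' : R) :
  Cconj (snd M) * hyperbolic_fixed_point e' = (e', snd (fst M)).
Proof. unfold hyperbolic_fixed_point; field; exact beta_conj_neq0. Qed.

Lemma hyperbolic_fixed_point_on_circle (e' : R) : (e' * e' = e * e)%R ->
  on_circle (hyperbolic_fixed_point e').
Proof.
  intros He'; pose proof beta_conj_neq0 as Hb.
  unfold on_circle, hyperbolic_fixed_point; rewrite Cmod_div, Cmod_conj by exact Hb.
  assert (Hmod : Cmod (e', snd (fst M)) = Cmod (snd M)).
  { apply Cmod_eq_of_Cnorm2; rewrite su11E in HM; unfold Cnorm2 in *; simpl; nra. }
  rewrite Hmod; field; intros H0; apply Hb; rewrite <- Cmod_conj in H0; apply Cmod_eq_0, H0.
Qed.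

Lemma act_den_hyperbolic_fixed_point (e' : R) :
  act_den M (hyperbolic_fixed_point e') = RtoC (fst (fst M) + e').
Proof.
  unfold act_den; rewrite hyperbolic_fixed_pointK.
  apply injective_projections; simpl; ring.
Qed.

Lemma act_fixE_hyperbolic (x : C) : on_circle x ->
  act M x = x <-> x = hyperbolic_fixed_point e \/ x = hyperbolic_fixed_point (- e).
Proof.
  intros Hx; rewrite (act_fixE M x HM Hx); pose proof beta_conj_neq0 as Hb.
  assert (Hx_eq : forall e', Cconj (snd M) * x = (e', snd (fst M)) -> x = hyperbolic_fixed_point e').
  { intros e' E; unfold hyperbolic_fixed_point; rewrite <- E; field; exact Hb. }
  split.
  - intros Him.
    assert (Hre : (fst (Cconj (snd M) * x)%C * fst (Cconj (snd M) * x)%C = e * e)%R).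
    { pose proof (Cmod_sqr (Cconj (snd M) * x)) as Hy.
      unfold on_circle in Hx; rewrite Cmod_mult, Cmod_conj, Hx, Rmult_1_r in Hy.
      unfold su11 in HM; rewrite (Cmod_sqr (fst M)) in HM; unfold Cnorm2 in *; rewrite Him in Hy; lra. }
    destruct (Rsqr_eq _ _ Hre) as [E | E]; [left | right]; apply Hx_eq;
      apply injective_projections; auto.
  - intros [-> | ->]; rewrite hyperbolic_fixed_pointK; reflexivity.
Qed.

End HyperbolicFixedPoints.

Lemma signed_sqrt_exists (a : R) : 1 < a * a -> exists e : R, e * e = a * a - 1 /\ 0 < a * e.
Proof.
  intros Ha; pose proof (sqrt_sqrt (a * a - 1) ltac:(lra)) as Hsq.
  pose proof (sqrt_lt_R0 (a * a - 1) ltac:(lra)) as Hpos.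
  destruct (Rlt_or_le 0 a); [exists (sqrt (a * a - 1)) | exists (- sqrt (a * a - 1))]; split; nra.
Qed.

Lemma act_hyperbolic (M : C * C) : su11 M -> (1 < fst (fst M) * fst (fst M))%R ->
  exists p q : C, p <> q /\
    (forall x, on_circle x -> (act M x = x <-> x = p \/ x = q)) /\
    attracting_on_circle (act M) p /\ repelling_on_circle (act M) q.
Proof.
  intros HM Ha; set (a1 := fst (fst M)) in *.
  (* Choosing [e] of the sign of [a1] makes [|a1 - e| < |a1 + e|]. *)
  destruct (signed_sqrt_exists a1 Ha) as [e [He Hae]].
  set (p := hyperbolic_fixed_point M e); set (q := hyperbolic_fixed_point M (- e)).
  assert (Hp : on_circle p) by (apply hyperbolic_fixed_point_on_circle with e; auto).
  assert (Hq : on_circle q) by (apply hyperbolic_fixed_point_on_circle with e; auto; ring).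
  pose proof (act_fixE_hyperbolic M e HM Ha He) as Hfix.
  assert (Fp : act M p = p) by (apply Hfix; auto).
  assert (Fq : act M q = q) by (apply Hfix; auto).
  assert (Hden : (Rabs (a1 + - e) < Rabs (a1 + e))%R) by (apply Rsqr_lt_abs_0; unfold Rsqr; nra).
  assert (Lp : act_den M p = RtoC (a1 + e)) by (apply act_den_hyperbolic_fixed_point; auto).
  assert (Lq : act_den M q = RtoC (a1 + - e)) by (apply act_den_hyperbolic_fixed_point; auto).
  exists p, q; split; [| split; [exact Hfix | split]].
  - apply (fixed_points_neq M p q (a1 + e) (a1 + - e)); auto.
  - apply (act_attracting M p q (a1 + e) (a1 + - e)); auto.
  - apply (act_repelling M p q (a1 + e) (a1 + - e)); auto.
Qed.

Section ComplexValuedDerivatives.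
Local Open Scope C_scope.

Lemma is_derive_fst (f : R -> C) (t : R) (d : C) :
  is_derive f t d -> is_derive (fun s => fst (f s)) t (fst d).
Proof. intros H; exact (filterdiff_comp' f fst t _ _ H (filterdiff_linear _ is_linear_fst)). Qed.

Lemma is_derive_snd (f : R -> C) (t : R) (d : C) :
  is_derive f t d -> is_derive (fun s => snd (f s)) t (snd d).
Proof. intros H; exact (filterdiff_comp' f snd t _ _ H (filterdiff_linear _ is_linear_snd)). Qed.

Lemma is_derive_components (f : R -> C) (t : R) (d : C) :
  is_derive (fun s => fst (f s)) t (fst d) -> is_derive (fun s => snd (f s)) t (snd d) ->
  is_derive f t d.
Proof.
  intros H1 H2.
  apply (is_derive_ext (fun s => (fst (f s), snd (f s)))); [intros s; destruct (f s); reflexivity |].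
  destruct d as [d1 d2].
  apply (@filterdiff_comp'_2 R_AbsRing R_NormedModule R_NormedModule R_NormedModule
           (prod_NormedModule R_AbsRing R_NormedModule R_NormedModule)
           (fun s => fst (f s)) (fun s => snd (f s)) (fun a b => (a, b)) t _ _ (fun a b => (a, b)) H1 H2).
  apply (filterdiff_ext_lin _ (fun y => y)); [| intros [a b]; reflexivity].
  apply filterdiff_ext with (fun y => y); [intros [a b]; reflexivity | apply filterdiff_id].
Qed.

Lemma is_derive_eq {V : NormedModule R_AbsRing} (f g : R -> V) (t : R) (l l' : V) :
  (forall s, f s = g s) -> l = l' -> is_derive f t l -> is_derive g t l'.
Proof. intros Hfg <-; apply is_derive_ext, Hfg. Qed.

Lemma is_derive_Cmult (f g : R -> C) (t : R) (df dg : C) :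
  is_derive f t df -> is_derive g t dg ->
  is_derive (fun s => f s * g s) t (df * g t + f t * dg).
Proof.
  intros Hf Hg; apply is_derive_components.
  - generalize (is_derive_minus _ _ _ _ _
      (is_derive_mult _ _ _ _ _ (is_derive_fst _ _ _ Hf) (is_derive_fst _ _ _ Hg) Rmult_comm)
      (is_derive_mult _ _ _ _ _ (is_derive_snd _ _ _ Hf) (is_derive_snd _ _ _ Hg) Rmult_comm)).
    apply is_derive_eq; [intros s |]; simpl; unfold minus, plus, opp, mult; simpl; ring.
  - generalize (is_derive_plus _ _ _ _ _
      (is_derive_mult _ _ _ _ _ (is_derive_fst _ _ _ Hf) (is_derive_snd _ _ _ Hg) Rmult_comm)
      (is_derive_mult _ _ _ _ _ (is_derive_snd _ _ _ Hf) (is_derive_fst _ _ _ Hg) Rmult_comm)).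
    apply is_derive_eq; [intros s |]; simpl; unfold plus, mult; simpl; ring.
Qed.

Lemma is_derive_Cinv (g : R -> C) (t : R) (dg : C) :
  is_derive g t dg -> g t <> 0 -> is_derive (fun s => / g s) t (- dg / (g t * g t)).
Proof.
  intros Hg Hg0.
  assert (HQ : (fst (g t) ^ 2 + snd (g t) ^ 2 <> 0)%R).
  { rewrite <- Cmod2_alt; apply pow_nonzero, Cmod_neq0, Hg0. }
  pose proof (is_derive_plus _ _ _ _ _ (is_derive_pow _ 2 _ _ (is_derive_fst _ _ _ Hg))
                (is_derive_pow _ 2 _ _ (is_derive_snd _ _ _ Hg))) as HdQ.
  assert (Hden : forall a b : R, (a * (a * 1) + b * (b * 1) <> 0 ->
            (a * a - b * b) * (a * a - b * b) + (a * b + b * a) * (a * b + b * a) <> 0 /\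
            a * a + b * b <> 0)%R).
  { intros a b H; rewrite !Rmult_1_r in H; split; [| exact H].
    replace ((a * a - b * b) * (a * a - b * b) + (a * b + b * a) * (a * b + b * a))%R
      with ((a * a + b * b) * (a * a + b * b))%R by ring.
    apply Rmult_integral_contrapositive_currified; exact H. }
  apply is_derive_components.
  - generalize (is_derive_div _ _ _ _ _ (is_derive_fst _ _ _ Hg) HdQ HQ).
    apply is_derive_eq; [reflexivity |].
    destruct (g t) as [a b], dg as [da db]; simpl in *; unfold plus; simpl.
    field; apply Hden, HQ.
  - generalize (is_derive_div _ _ _ _ _ (is_derive_opp _ _ _ (is_derive_snd _ _ _ Hg)) HdQ HQ).
    apply is_derive_eq; [reflexivity |].
    destruct (g t) as [a b], dg as [da db]; simpl in *; unfold plus, opp; simpl.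
    field; apply Hden, HQ.
Qed.

Lemma is_derive_RtoC (f : R -> R) (t df : R) :
  is_derive f t df -> is_derive (fun s => RtoC (f s)) t (RtoC df).
Proof. intros H; apply is_derive_components; [exact H | exact (is_derive_const 0%R t)]. Qed.

Lemma is_derive_Cconst (A : C) (t : R) : is_derive (fun _ : R => A) t (RtoC 0).
Proof. apply is_derive_components; exact (@is_derive_const R_AbsRing R_NormedModule _ t). Qed.

Lemma is_derive_real_combination (f g : R -> R) (A B : C) (t df dg : R) :
  is_derive f t df -> is_derive g t dg ->
  is_derive (fun s => RtoC (f s) * A + RtoC (g s) * B) t (RtoC df * A + RtoC dg * B).
Proof.
  intros Hf Hg.
  generalize (is_derive_plus _ _ _ _ _
    (is_derive_Cmult _ _ _ _ _ (is_derive_RtoC _ _ _ Hf) (is_derive_Cconst A t))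
    (is_derive_Cmult _ _ _ _ _ (is_derive_RtoC _ _ _ Hg) (is_derive_Cconst B t))).
  apply is_derive_eq; [reflexivity |].
  apply injective_projections; simpl; unfold plus; simpl; ring.
Qed.

Lemma is_derive_Cnorm2 (f : R -> C) (t : R) (df : C) : is_derive f t df ->
  is_derive (fun s => Cnorm2 (f s)) t (2 * (fst (f t) * fst df + snd (f t) * snd df))%R.
Proof.
  intros Hf; pose proof (is_derive_fst _ _ _ Hf) as H1; pose proof (is_derive_snd _ _ _ Hf) as H2.
  generalize (is_derive_plus _ _ _ _ _ (is_derive_mult _ _ _ _ _ H1 H1 Rmult_comm)
                                       (is_derive_mult _ _ _ _ _ H2 H2 Rmult_comm)).
  apply is_derive_eq; [reflexivity |]; unfold plus, mult; simpl; ring.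
Qed.

End ComplexValuedDerivatives.

Lemma is_derive_continuity_pt (f : R -> R) (t l : R) : is_derive f t l -> continuity_pt f t.
Proof. intros H; apply derivable_continuous_pt; exists l; apply is_derive_Reals, H. Qed.

(* Gronwall: [F e^(-K t)] is nonincreasing on [a, b]. *)
Lemma deriv_le_linear_nonpos (F dF : R -> R) (K a b : R) : a <= b ->
  (forall t, is_derive F t (dF t)) -> (forall t, a <= t <= b -> dF t <= K * F t) ->
  F a = 0 -> F b <= 0.
Proof.
  intros Hab HF Hle Ha.
  set (G := fun t => F t * exp (- K * t)).
  set (dG := fun t => (dF t - K * F t) * exp (- K * t)).
  assert (HG : forall t, is_derive G t (dG t)).
  { intros t.
    assert (Hexp : is_derive (fun s => exp (- K * s)) t (- K * exp (- K * t))) by (auto_derive; auto; ring).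
    generalize (is_derive_mult _ _ _ _ _ (HF t) Hexp Rmult_comm).
    apply is_derive_eq; [reflexivity |]; unfold dG, plus, mult; simpl; ring. }
  destruct (MVT_gen G a b dG) as [c [Hc HGc]].
  { intros t _; apply HG. }
  { intros t _; exact (is_derive_continuity_pt _ _ _ (HG t)). }
  rewrite Rmin_left, Rmax_right in Hc by exact Hab.
  assert (HdGc : dG c <= 0).
  { unfold dG; pose proof (Hle c Hc); pose proof (exp_pos (- K * c)); nra. }
  assert (HGb : G b <= 0) by (unfold G at 2 in HGc; rewrite Ha in HGc; nra).
  unfold G in HGb; pose proof (exp_pos (- K * b)); nra.
Qed.

Lemma cosh_sqr_sub_sinh_sqr (x : R) : cosh x * cosh x - sinh x * sinh x = 1.
Proof.
  unfold cosh, sinh.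
  replace ((exp x + exp (- x)) / 2 * ((exp x + exp (- x)) / 2)
           - (exp x - exp (- x)) / 2 * ((exp x - exp (- x)) / 2)) with (exp x * exp (- x)) by field.
  rewrite <- exp_plus, Rplus_opp_r; apply exp_0.
Qed.

Lemma is_derive_cosh_scal (r t : R) : is_derive (fun s => cosh (r * s)) t (r * sinh (r * t)).
Proof. unfold cosh, sinh; auto_derive; [auto | field]. Qed.

Lemma is_derive_sinh_scal (r t : R) : is_derive (fun s => sinh (r * s)) t (r * cosh (r * t)).
Proof. unfold cosh, sinh; auto_derive; [auto | field]. Qed.

Lemma riccati_identity (a u : C) (c s m r k : R) :
  (c * c - s * s = 1)%R -> (m * m = fst u * fst u + snd u * snd u)%R -> m <> 0%R ->
  r = (m * k)%R ->
  let N := (RtoC c * a + RtoC (- s / m) * u)%C in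
  let D := (RtoC c * 1 + RtoC (- s / m) * (Cconj u * a))%C in
  let N' := (RtoC (r * s) * a + RtoC (- (r * c) / m) * u)%C in
  let D' := (RtoC (r * s) * 1 + RtoC (- (r * c) / m) * (Cconj u * a))%C in
  D <> 0 ->
  (N' / D + N * (- D' / (D * D)) = RtoC k * (N / D * (N / D) * Cconj u - u))%C.
Proof.
  intros Hcs Hm Hm0 -> N D N' D' HD.
  transitivity ((N' * D - N * D') / (D * D))%C; [field; exact HD |].
  transitivity (RtoC k * (N * N * Cconj u - u * (D * D)) / (D * D))%C; [| field; exact HD].
  f_equal; subst N D N' D'.
  destruct a as [a1 a2], u as [u1 u2]; simpl in Hm.
  unfold Rdiv; set (im := / m); assert (Him : (m * im = 1)%R) by (unfold im; field; exact Hm0).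
  clearbody im; apply injective_projections; simpl; nsatz.
Qed.

Lemma is_derive_riccati_dist (l : R) (u : C) (z y : R -> C) (t : R) :
  is_derive z t (prytz_field l u (z t)) -> is_derive y t (prytz_field l u (y t)) ->
  is_derive (fun s => Cnorm2 (z s - y s)%C) t
    (2 * / (2 * l) * (fst u * (fst (z t) + fst (y t)) + snd u * (snd (z t) + snd (y t)))
       * Cnorm2 (z t - y t)%C).
Proof.
  intros Hz Hy; generalize (is_derive_Cnorm2 _ _ _ (is_derive_minus _ _ _ _ _ Hz Hy)).
  apply is_derive_eq; [reflexivity |].
  unfold prytz_field, Cnorm2; destruct (z t) as [z1 z2], (y t) as [y1 y2], u as [u1 u2].
  unfold minus, plus, opp; simpl; unfold plus, opp; simpl; ring.
Qed.

Lemma dot_add_le (u z y : C) :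
  2 * (fst u * (fst z + fst y) + snd u * (snd z + snd y)) <= Cnorm2 u + 2 * Cnorm2 z + 2 * Cnorm2 y.
Proof.
  unfold Cnorm2; destruct u as [u1 u2], z as [z1 z2], y as [y1 y2]; simpl.
  pose proof (Rle_0_sqr (u1 - (z1 + y1))); pose proof (Rle_0_sqr (u2 - (z2 + y2))).
  pose proof (Rle_0_sqr (z1 - y1)); pose proof (Rle_0_sqr (z2 - y2)); unfold Rsqr in *; nra.
Qed.

Section SegmentFlow.
Local Open Scope C_scope.

Variables (l : R) (u : C).
Hypothesis Hu : u <> 0.

(* [exp (t X)] for [X = [[0, -u], [-conj u, 0]] / (2 l)], whose Möbius action generates the
   Riccati flow [prytz_field l u]: [X^2 = r^2] with [r = |u| / (2 l)]. *)
Definition segment_mx (t : R) : C * C :=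
  (RtoC (cosh (Cmod u / (2 * l) * t)), RtoC (- sinh (Cmod u / (2 * l) * t) / Cmod u) * u).

Lemma su11_segment_mx (t : R) : su11 (segment_mx t).
Proof.
  apply su11E; pose proof (Cmod_neq0 u Hu) as Hm; pose proof (Cmod_sqr u) as Hm2.
  pose proof (cosh_sqr_sub_sinh_sqr (Cmod u / (2 * l) * t)) as Hcs.
  unfold segment_mx; simpl.
  set (c := cosh (Cmod u / (2 * l) * t)) in *; set (s := sinh (Cmod u / (2 * l) * t)) in *.
  set (m := Cmod u) in *; destruct u as [u1 u2]; unfold Cnorm2 in *; simpl in *.
  field_simplify; [| exact Hm].
  replace (c ^ 2 * m ^ 2 - s ^ 2 * u1 ^ 2 - s ^ 2 * u2 ^ 2)%R with ((c * c - s * s) * (m * m))%R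
    by (symmetry; transitivity (c ^ 2 * m ^ 2 - s ^ 2 * (u1 * u1 + u2 * u2))%R; [ring | rewrite <- Hm2; ring]).
  rewrite Hcs; field; exact Hm.
Qed.

Lemma act_segment_mx_0 (a : C) : act (segment_mx 0) a = a.
Proof.
  unfold act, mobius, segment_mx; simpl; rewrite Rmult_0_r, cosh_0, sinh_0.
  destruct a as [a1 a2]; unfold Cdiv, Cinv; apply injective_projections; simpl; field; exact (Cmod_neq0 u Hu).
Qed.

Lemma is_derive_segment_flow (a : C) (t : R) : on_circle a ->
  is_derive (fun s => act (segment_mx s) a) t (prytz_field l u (act (segment_mx t) a)).
Proof.
  intros Ha; pose proof (Cmod_neq0 u Hu) as Hm.
  set (r := (Cmod u / (2 * l))%R); set (m := Cmod u) in *.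
  set (N := fun s => RtoC (cosh (r * s)) * a + RtoC (- sinh (r * s) / m) * u).
  set (D := fun s => RtoC (cosh (r * s)) * 1 + RtoC (- sinh (r * s) / m) * (Cconj u * a)).
  assert (HD : forall s, act_den (segment_mx s) a = D s).
  { intros s; unfold act_den, segment_mx, D, r, m; apply injective_projections; simpl; ring. }
  assert (Hact : forall s, N s * / D s = act (segment_mx s) a) by (intros s; rewrite actE, HD; reflexivity).
  assert (HD0 : D t <> 0) by (rewrite <- HD; apply act_den_neq0; [apply su11_segment_mx | exact Ha]).
  assert (Hsinh : is_derive (fun s => - sinh (r * s) / m)%R t (- (r * cosh (r * t)) / m)%R).
  { generalize (is_derive_scal _ _ (- / m)%R _ (is_derive_sinh_scal r t)).
    apply is_derive_eq; [intros s |]; simpl; unfold Rdiv; ring. }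
  pose proof (is_derive_real_combination _ _ a u _ _ _ (is_derive_cosh_scal r t) Hsinh) as HdN.
  pose proof (is_derive_real_combination _ _ 1 (Cconj u * a) _ _ _ (is_derive_cosh_scal r t) Hsinh) as HdD.
  generalize (is_derive_Cmult _ _ _ _ _ HdN (is_derive_Cinv _ _ _ HdD HD0)).
  apply is_derive_eq; [exact Hact |].
  rewrite <- Hact; unfold prytz_field.
  apply riccati_identity; auto.
  - apply cosh_sqr_sub_sinh_sqr.
  - unfold m; change (fst u * fst u + snd u * snd u)%R with (Cnorm2 u); rewrite <- Cmod_sqr; ring.
Qed.

Lemma prytz_segment_exists (a : C) : on_circle a -> prytz_segment l u a (act (segment_mx 1) a).
Proof.
  intros Ha; exists (fun s => act (segment_mx s) a).
  split; [apply act_segment_mx_0 | split; [reflexivity |]].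
  intros t; apply is_derive_segment_flow, Ha.
Qed.

Lemma prytz_segment_unique (a b : C) : 0 < l -> on_circle a -> prytz_segment l u a b ->
  b = act (segment_mx 1) a.
Proof.
  intros Hl Ha [z [Hz0 [Hz1 Hzd]]].
  set (y := fun s => act (segment_mx s) a).
  assert (Hyd : forall t, is_derive y t (prytz_field l u (y t))) by (intros t; apply is_derive_segment_flow, Ha).
  assert (Hyc : forall t, on_circle (y t)) by (intros t; apply act_on_circle; [apply su11_segment_mx | exact Ha]).
  assert (Hk : (0 < / (2 * l))%R) by (apply Rinv_0_lt_compat; lra).
  destruct (continuity_ab_maj (fun s => Cnorm2 (z s)) 0 1 ltac:(lra)
              (fun c _ => is_derive_continuity_pt _ _ _ (is_derive_Cnorm2 _ _ _ (Hzd c)))) as [tmax [Hmax _]].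
  assert (Hdist : (Cnorm2 (z 1%R - y 1%R) <= 0)%R).
  { eapply (deriv_le_linear_nonpos (fun s => Cnorm2 (z s - y s))
             _ (/ (2 * l) * (Cnorm2 u + 2 * Cnorm2 (z tmax) + 2)) 0 1); [lra | | |].
    - intros t; apply is_derive_riccati_dist; auto.
    - intros t Ht; specialize (Hmax t Ht); pose proof (Hyc t) as Hy; rewrite on_circleE in Hy.
      pose proof (dot_add_le u (z t) (y t)) as Hdot.
      assert (0 <= / (2 * l) * Cnorm2 (z t - y t))%R by (apply Rmult_le_pos; [lra | apply Cnorm2_ge0]).
      nra.
    - unfold y; rewrite Hz0, act_segment_mx_0; unfold Cnorm2; simpl; ring. }
  apply Cnorm2_le0 in Hdist; rewrite Hz1 in Hdist.
  rewrite <- (Cplus_0_l (act _ a)), <- Hdist; unfold y; ring.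
Qed.

Lemma prytz_segmentE (a b : C) : 0 < l -> on_circle a ->
  prytz_segment l u a b <-> b = act (segment_mx 1) a.
Proof.
  intros Hl Ha; split; [apply prytz_segment_unique; auto |].
  intros ->; apply prytz_segment_exists, Ha.
Qed.

End SegmentFlow.

Section Holonomy.
Local Open Scope C_scope.

Definition holonomy_mx (l : R) (v w : C) : C * C :=
  mx_mul (mx_inv (segment_mx l w 1))
    (mx_mul (mx_inv (segment_mx l v 1)) (mx_mul (segment_mx l w 1) (segment_mx l v 1))).

Lemma segment_mx_opp (l : R) (u : C) (t : R) : segment_mx l (- u) t = mx_inv (segment_mx l u t).
Proof. unfold segment_mx, mx_inv; simpl; rewrite Cmod_opp; f_equal; ring. Qed.

Lemma su11_holonomy_mx (l : R) (v w : C) : v <> 0 -> w <> 0 -> su11 (holonomy_mx l v w).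
Proof.
  intros Hv Hw; pose proof (su11_segment_mx l v Hv 1) as Sv; pose proof (su11_segment_mx l w Hw 1) as Sw.
  unfold holonomy_mx; repeat apply su11_mul; auto; apply su11_inv; auto.
Qed.

Lemma prytz_holonomyE (l : R) (v w z0 z4 : C) : 0 < l -> v <> 0 -> w <> 0 -> on_circle z0 ->
  prytz_holonomy l v w z0 z4 <-> z4 = act (holonomy_mx l v w) z0.
Proof.
  intros Hl Hv Hw Hz0.
  assert (Hv' : - v <> 0) by (intros E; apply Hv; replace v with (- - v) by ring; rewrite E; ring).
  assert (Hw' : - w <> 0) by (intros E; apply Hw; replace w with (- - w) by ring; rewrite E; ring).
  pose proof (su11_segment_mx l v Hv 1) as Sv; pose proof (su11_segment_mx l w Hw 1) as Sw.
  pose proof (su11_segment_mx l (- v) Hv' 1) as Sv'; pose proof (su11_segment_mx l (- w) Hw' 1) as Sw'.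
  assert (Hcomp : act (holonomy_mx l v w) z0
    = act (segment_mx l (- w) 1) (act (segment_mx l (- v) 1)
        (act (segment_mx l w 1) (act (segment_mx l v 1) z0)))).
  { unfold holonomy_mx; rewrite <- !segment_mx_opp.
    rewrite !act_mul; auto; repeat apply su11_mul; auto; repeat apply act_on_circle; auto. }
  rewrite Hcomp; split.
  - intros (z1 & z2 & z3 & S1 & S2 & S3 & S4).
    apply prytz_segmentE in S1; auto; subst z1.
    apply prytz_segmentE in S2; auto; [subst z2 | apply act_on_circle; auto].
    apply prytz_segmentE in S3; auto; [subst z3 | repeat apply act_on_circle; auto].
    apply prytz_segmentE in S4; auto; repeat apply act_on_circle; auto.
  - intros ->; do 3 eexists; repeat split; apply prytz_segmentE; auto; repeat apply act_on_circle; auto.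
Qed.

Lemma trace_commutator (M N : C * C) : su11 M -> su11 N ->
  snd (fst M) = 0%R -> snd (fst N) = 0%R ->
  let H := mx_mul (mx_inv N) (mx_mul (mx_inv M) (mx_mul N M)) in
  fst H + Cconj (fst H) = RtoC (2 - 4 * (fst (snd M) * snd (snd N) - snd (snd M) * fst (snd N)) ^ 2).
Proof.
  rewrite !su11E; intros HM HN HM2 HN2 H; subst H.
  destruct M as [[a1 a2] [p1 p2]], N as [[c1 c2] [q1 q2]]; unfold Cnorm2 in *; simpl in *; subst.
  apply injective_projections; simpl; [nsatz | ring].
Qed.

Lemma cross_of_angle (v w : C) (theta : R) : v <> 0 ->
  RtoC (Cmod v) * w = RtoC (Cmod w) * (cos theta, sin theta) * v ->
  (fst v * snd w - snd v * fst w = Cmod v * Cmod w * sin theta)%R.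
Proof.
  intros Hv Hang; pose proof (Cmod_neq0 v Hv) as Hm; pose proof (Cmod_sqr v) as Hm2.
  destruct v as [v1 v2], w as [w1 w2]; injection Hang as A1 A2; simpl in A1, A2 |- *.
  apply Rmult_eq_reg_l with (Cmod (v1, v2)); [| exact Hm].
  transitivity (v1 * (Cmod (v1, v2) * w2 + 0 * w1) - v2 * (Cmod (v1, v2) * w1 - 0 * w2))%R; [ring |].
  rewrite A1, A2; transitivity (Cmod (w1, w2) * sin theta * Cmod (v1, v2) ^ 2)%R; [rewrite Hm2; unfold Cnorm2; simpl; ring | ring].
Qed.

Lemma trace_holonomy_mx (l : R) (v w : C) (theta : R) : v <> 0 -> w <> 0 ->
  RtoC (Cmod v) * w = RtoC (Cmod w) * (cos theta, sin theta) * v ->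
  fst (holonomy_mx l v w) + Cconj (fst (holonomy_mx l v w))
  = RtoC (2 - 4 * (sinh (Cmod v / (2 * l)) * sinh (Cmod w / (2 * l)) * sin theta) ^ 2).
Proof.
  intros Hv Hw Hang.
  unfold holonomy_mx; rewrite trace_commutator; try apply su11_segment_mx; auto; try (simpl; ring).
  do 2 f_equal; unfold segment_mx; simpl.
  pose proof (Cmod_neq0 v Hv); pose proof (Cmod_neq0 w Hw).
  replace (sin theta) with ((fst v * snd w - snd v * fst w) / (Cmod v * Cmod w))%R
    by (rewrite (cross_of_angle v w theta Hv Hang); field; auto).
  rewrite !Rmult_1_r; field; auto.
Qed.

End Holonomy.

Theorem mainTheorem6 (l : R) (v w : C) (theta : R) :
  0 < l -> v <> RtoC 0 -> w <> RtoC 0 ->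
  0 < theta < PI ->
  Cmult (RtoC (Cmod v)) w = Cmult (Cmult (RtoC (Cmod w)) (cos theta, sin theta)) v ->
  let s := sinh (Cmod v / (2 * l)) * sinh (Cmod w / (2 * l)) * sin theta in
  exists alpha beta : C,
    Cmod alpha ^ 2 - Cmod beta ^ 2 = 1 /\
    Cplus alpha (Cconj alpha) = RtoC (2 - 4 * s ^ 2) /\
    (forall z0 z4 : C, on_circle z0 ->
       (prytz_holonomy l v w z0 z4 <-> z4 = mobius alpha beta z0)) /\
    (1 < s ->
       exists p q : C, p <> q /\
         (forall x : C, on_circle x ->
            (prytz_holonomy l v w x x <-> x = p \/ x = q)) /\
         attracting_on_circle (mobius alpha beta) p /\
         repelling_on_circle (mobius alpha beta) q) /\
    (s < 1 -> forall x : C, on_circle x -> ~ prytz_holonomy l v w x x).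
Proof.
  intros Hl Hv Hw Htheta Hang s.
  set (M := holonomy_mx l v w).
  pose proof (su11_holonomy_mx l v w Hv Hw) as HM.
  pose proof (trace_holonomy_mx l v w theta Hv Hw Hang) as Htr.
  pose proof (fun z0 z4 => prytz_holonomyE l v w z0 z4 Hl Hv Hw) as Hhol.
  fold M s in HM, Htr, Hhol; clearbody M.
  assert (Hre : fst (fst M) = 1 - 2 * s ^ 2) by (apply (f_equal fst) in Htr; simpl in Htr; lra).
  assert (Hs : 0 < s).
  { assert (Hsinh : forall x, 0 < x -> 0 < sinh x) by (intros x Hx; rewrite <- sinh_0; apply sinh_lt, Hx).
    unfold s; apply Rmult_lt_0_compat; [apply Rmult_lt_0_compat | apply sin_gt_0; lra];
      apply Hsinh, Rdiv_lt_0_compat; try apply Cmod_gt_0; auto; lra. }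
  exists (fst M), (snd M); split; [exact HM | split; [exact Htr | split; [exact Hhol | split]]].
  - intros Hs1; destruct (act_hyperbolic M HM) as (p & q & Hpq & Hfix & Hp & Hq).
    { rewrite Hre; assert (1 < s * s) by nra; simpl; nra. }
    exists p, q; split; [exact Hpq | split; [| split; assumption]].
    intros x Hx; rewrite (Hhol x x Hx), <- (Hfix x Hx); split; auto.
  - intros Hs1 x Hx Hx_fix; rewrite (Hhol x x Hx) in Hx_fix.
    apply (act_no_fixpoint M x HM); [| exact Hx | symmetry; exact Hx_fix].
    rewrite Hre; assert (0 < s * s < 1) by (split; nra); simpl; nra.
Qed.
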